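(* An infinite countable locally finite abelian group $A$ possesses an increasing sequence $(Y_n)_{n=1}^\infty$ of finite subsets, each of which is individually $4$-incompressible, such that $|Y_{n-1}|<|Y_n|\le2|Y_{n-1}|$ for all $n$.
   Context: A group is locally finite if every finitely generated subgroup is finite. A finite set $Y\subseteq A$ containing $0$ is individually $C$-incompressible if for every sequence of translates $\{Y+f_i\}_{i=1}^I$ with $f_i\notin\bigcup_{j<i}(Y+f_j)$ for all $i$, the number of sets $Y+f_i$ containing $0$ is at most $C$. *)

From HB Require Import structures.
From mathcomp Require Import all_boot all_order all_algebra.
From mathcomp Require Import finmap.
Set Implicit Arguments. Unset Strict Implicit. Unset Printing Implicit Defensive.
Import Order.TTheory GRing.Theory.
Local Open Scope ring_scope.
Local Open Scope fset_scope.

Definition gen_subgroup (A : zmodType) (s : seq A) (x : A) : Prop :=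
  exists c : 'I_(size s) -> int, x = \sum_(i < size s) (s`_i *~ c i).

Definition finite_pred (A : eqType) (P : A -> Prop) : Prop :=
  exists l : seq A, forall x, P x -> x \in l.

Definition locally_finite (A : zmodType) : Prop :=
  forall s : seq A, finite_pred (gen_subgroup s).

Definition infinite_type (A : eqType) : Prop := ~ finite_pred (fun _ : A => True).

Definition in_translate (A : countZmodType) (Y : {fset A}) (f x : A) : bool :=
  (x - f) \in Y.

(* Y is individually C-incompressible: 0 \in Y, and for every finite sequence
   of translates Y + f_1, ..., Y + f_I with f_i \notin \bigcup_{j<i} (Y + f_j),
   the number of i with 0 \in Y + f_i is at most C. *)
Definition indiv_incompressible (A : countZmodType) (C : nat) (Y : {fset A}) : Prop :=
  ((0%R : A) \in Y) /\
  forall fs : seq A,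
    (forall i j : nat, (i < size fs)%N -> (j < i)%N ->
        ~~ in_translate Y fs`_j fs`_i) ->
    (count (fun f => in_translate Y f (0%R : A)) fs <= C)%N.

From HB Require Import structures.
From mathcomp Require Import all_boot all_order all_algebra.
From mathcomp Require Import finmap zify.
From Stdlib Require Import ClassicalEpsilon.
Set Implicit Arguments. Unset Strict Implicit. Unset Printing Implicit Defensive.
Local Open Scope fset_scope.
Local Open Scope ring_scope.
Import GRing.Theory.

(* Take every Y_n to be a coset progression H + a W_k, with H a finite subgroup
   and W_k = [-floor(k/2), ceil(k/2)] a window of k + 1 integers around 0.
   Three translates Y + f_i containing 0, each f_i outside the earlier
   translates, would give three points of W_k no pairwise difference of which
   lies in W_k; this is impossible, so such Y is even 2-incompressible.  Y grows
   by adding one layer H + a t to the window, which at most doubles it; if that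
   layer already lies in Y, then a has period at most k + 1 modulo H, so Y is
   itself a finite subgroup and Y + b, for any b outside Y (A is infinite),
   can be added instead. *)

Definition window (k : nat) (t : int) : bool := - (k./2)%:Z <= t <= (uphalf k)%:Z.

Definition window_edge (k : nat) : int :=
  if odd k then - (uphalf k)%:Z else (uphalf k).+1%:Z.

Lemma window0 k : window k 0.
Proof. rewrite /window; lia. Qed.

Lemma window1 t : window 1 t = (t == 0) || (t == 1).
Proof. rewrite /window; apply/idP/idP; lia. Qed.

Lemma window_succ k t : window k.+1 t = window k t || (t == window_edge k).
Proof. rewrite /window /window_edge; case: ifP => ?; apply/idP/idP; lia. Qed.

Lemma window_edge_gap k t : window k t -> 0 < `|window_edge k - t| <= k.+1%:Z.
Proof. rewrite /window /window_edge; case: ifP => ?; lia. Qed.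

Lemma window_triple k x y z : window k x -> window k y -> window k z ->
  [|| window k (x - y), window k (x - z) | window k (y - z)].
Proof. rewrite /window; lia. Qed.

Lemma window_cover k (p : int) : 0 < `|p| <= k.+1%:Z ->
  forall t, exists2 s, window k s & exists q, t = s + q * p.
Proof.
move=> p_bnd t; have p0 : p != 0 by move: p_bnd; lia.
pose lo := - (k./2)%:Z.
exists (lo + modz (t - lo) p); last first.
  by exists (divz (t - lo) p); have := divz_eq (t - lo) p; lia.
have := modz_ge0 (t - lo) p0; have := ltz_mod (t - lo) p0.
rewrite /window /lo; lia.
Qed.

Lemma card_fsetU_bounds (K : choiceType) (Y Z : {fset K}) :
  ~~ (Z `<=` Y) -> (#|` Z| <= #|` Y|)%N -> (#|` Y| < #|` Y `|` Z| <= 2 * #|` Y|)%N.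
Proof.
move=> ZY cardZ; rewrite fproper_ltn_card ?fproperUl //=.
by rewrite (leq_trans (leq_card_fsetU _ _)) // mul2n -addnn leq_add2l.
Qed.

Lemma exists_notin_fset (K : choiceType) (Y : {fset K}) :
  infinite_type K -> exists b, b \notin Y.
Proof.
move=> Kinf; apply: NNPP => allY; apply: Kinf; exists (enum_fset Y) => x _.
by apply: NNPP => xY; apply: allY; exists x; apply/negP.
Qed.

Section CosetProgressions.
Variable A : zmodType.

Lemma zmod_closed_mulz (H : {fset A}) x z :
  zmod_closed [in H] -> x \in H -> x *~ z \in H.
Proof.
move=> Hc xH; have [H0 HD] := GRing.zmod_closedD Hc.
have HMn n : x *+ n \in H by elim: n => [|n IHn]; rewrite ?mulr0n ?mulrSr ?HD.
case: z => n; rewrite ?NegzE ?mulrNz; first exact: HMn.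
exact: (GRing.zmod_closedN Hc) (HMn _).
Qed.

Definition in_progression (H : {fset A}) (a : A) (k : nat) (x : A) : Prop :=
  exists h t, [/\ h \in H, window k t & x = h + a *~ t].

Definition coset_progression (Y : {fset A}) : Prop :=
  exists H a k, zmod_closed [in H] /\
    forall x, x \in Y <-> in_progression H a k x.

Lemma in_progression_base H a k h : h \in H -> in_progression H a k h.
Proof. by move=> hH; exists h, 0; rewrite mulr0z addr0 window0. Qed.

Lemma in_progressionB H a k hx hy tx ty :
  zmod_closed [in H] -> hx \in H -> hy \in H -> window k (tx - ty) ->
  in_progression H a k ((hx + a *~ tx) - (hy + a *~ ty)).
Proof.
move=> [_ HB] hxH hyH wt; exists (hx - hy), (tx - ty).
by split=> //; [exact: HB | rewrite mulrzBr opprD addrACA].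
Qed.

Lemma coset_progression_no_triple Y x y z : coset_progression Y ->
  - x \in Y -> - y \in Y -> - z \in Y -> [|| y - x \in Y, z - x \in Y | z - y \in Y].
Proof.
move=> [H [a [k [Hc HY]]]].
move=> /HY[hx [tx [hxH wx Ex]]] /HY[hy [ty [hyH wy Ey]]] /HY[hz [tz [hzH wz Ez]]].
have diffY u v hu hv tu tv : - u = hu + a *~ tu -> - v = hv + a *~ tv ->
    hu \in H -> hv \in H -> window k (tu - tv) -> v - u \in Y.
  move=> Eu Ev huH hvH wuv; apply/HY.
  have -> : v - u = - u - - v by rewrite opprK addrC.
  by rewrite Eu Ev; exact: in_progressionB.
have := window_triple wx wy wz.
case/or3P => w; apply/or3P.
- exact/Or31/(diffY _ _ _ _ _ _ Ex Ey hxH hyH w).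
- exact/Or32/(diffY _ _ _ _ _ _ Ex Ez hxH hzH w).
- exact/Or33/(diffY _ _ _ _ _ _ Ey Ez hyH hzH w).
Qed.

Lemma subgroup_progression (H : {fset A}) :
  zmod_closed [in H] -> coset_progression H.
Proof.
move=> Hc; exists H, 0, 0%N; split=> // x; split; first exact: in_progression_base.
by move=> [h [t [hH _ ->]]]; rewrite mul0rz addr0.
Qed.

Lemma in_progression_succ H a k (Y : {fset A}) :
  (forall x, x \in Y <-> in_progression H a k x) ->
  forall x, x \in Y `|` [fset h + a *~ window_edge k | h in H] <->
            in_progression H a k.+1 x.
Proof.
move=> HY x; rewrite in_fsetU; split.
  case/orP=> [/HY[h [t [hH wt ->]]] | /imfsetP[h hH ->]].
    by exists h, t; rewrite window_succ wt.
  by exists h, (window_edge k); rewrite window_succ eqxx orbT.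
move=> [h [t [hH]]]; rewrite window_succ => /orP[wt | /eqP->] ->.
  by apply/orP; left; apply/HY; exists h, t.
by apply/orP; right; apply/imfsetP; exists h.
Qed.

Lemma in_progression_period H a k p :
  zmod_closed [in H] -> 0 < `|p| <= k.+1%:Z -> a *~ p \in H ->
  forall h t, h \in H -> in_progression H a k (h + a *~ t).
Proof.
move=> Hc p_bnd apH h t hH; have [s ws [q ->]] := window_cover p_bnd t.
exists (h + (a *~ p) *~ q), s; split=> //.
  exact: (GRing.zmod_closedD Hc).2 _ _ hH (zmod_closed_mulz q Hc apH).
by rewrite -mulrzA (mulrC p) mulrzDr addrA addrAC.
Qed.

Lemma progression_zmod_closed H a k (Y : {fset A}) :
  zmod_closed [in H] -> (forall x, x \in Y <-> in_progression H a k x) ->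
  a *~ window_edge k \in Y -> zmod_closed [in Y].
Proof.
move=> Hc HY /HY[h0 [t0 [h0H wt0 Eh0]]].
have apH : a *~ (window_edge k - t0) \in H by rewrite mulrzBr Eh0 addrK.
have absorb := in_progression_period Hc (window_edge_gap wt0) apH.
split; first exact/HY/in_progression_base/(proj1 Hc).
move=> _ _ /HY[hx [tx [hxH _ ->]]] /HY[hy [ty [hyH _ ->]]]; apply/HY.
rewrite opprD addrACA -mulrzBr; apply: absorb.
by case: Hc => _; apply.
Qed.

Lemma coset_union_progression (Y : {fset A}) b :
  zmod_closed [in Y] -> coset_progression (Y `|` [fset y + b | y in Y]).
Proof.
move=> Yc; exists Y, b, 1%N; split=> // x; rewrite in_fsetU; split.
  case/orP=> [xY | /imfsetP[y yY ->]]; first exact: in_progression_base.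
  by exists y, 1; rewrite mulr1z.
move=> [y [t [yY]]]; rewrite window1 => /orP[] /eqP-> ->.
  by rewrite mulr0z addr0 yY.
by rewrite mulr1z; apply/orP; right; apply/imfsetP; exists y.
Qed.

Lemma coset_progression_grow (Y : {fset A}) :
  infinite_type A -> coset_progression Y ->
  exists2 Y', coset_progression Y' &
    Y `<=` Y' /\ (#|` Y| < #|` Y'| <= 2 * #|` Y|)%N.
Proof.
move=> Ainf [H [a [k [Hc HY]]]].
have H0 : (0 : A) \in H := (GRing.zmod_closedD Hc).1.
have [edgeY | edgeNY] := boolP (a *~ window_edge k \in Y).
  have Yc := progression_zmod_closed Hc HY edgeY.
  have [b bNY] := exists_notin_fset Y Ainf.
  exists (Y `|` [fset y + b | y in Y]); first exact: coset_union_progression.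
  split; first exact: fsubsetUl.
  apply: card_fsetU_bounds; last exact: leq_imfset_card.
  apply/fsubsetPn; exists b => //; apply/imfsetP; exists 0; rewrite ?add0r //.
  exact: (GRing.zmod_closedD Yc).1.
exists (Y `|` [fset h + a *~ window_edge k | h in H]).
  by exists H, a, k.+1; split=> //; exact: in_progression_succ.
split; first exact: fsubsetUl.
apply: card_fsetU_bounds.
  apply/fsubsetPn; exists (a *~ window_edge k) => //.
  by apply/imfsetP; exists 0; rewrite ?add0r.
apply: leq_trans (leq_imfset_card _ _ _) _; apply: fsubset_leq_card.
by apply/fsubsetP => h /(in_progression_base a k) /HY.
Qed.

End CosetProgressions.

Section Incompressibility.
Variable A : countZmodType.
Implicit Types (Y : {fset A}) (C D : nat).

Lemma indiv_incompressibleW C D Y :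
  (C <= D)%N -> indiv_incompressible C Y -> indiv_incompressible D Y.
Proof.
move=> leCD [Y0 bound]; split=> // fs sep.
exact: leq_trans (bound fs sep) leCD.
Qed.

Lemma indiv_incompressible2 Y : (0 : A) \in Y ->
  (forall x y z, - x \in Y -> - y \in Y -> - z \in Y ->
     [|| y - x \in Y, z - x \in Y | z - y \in Y]) ->
  indiv_incompressible 2 Y.
Proof.
move=> Y0 no_triple; split=> // fs sep.
have sep_fs : pairwise (fun f g => g - f \notin Y) fs.
  by apply/(pairwiseP 0) => i j; rewrite -!topredE /= => ? ? ?; exact: sep.
rewrite -size_filter.
have := pairwise_filter (fun f => in_translate Y f 0) sep_fs.
have := filter_all (fun f => in_translate Y f 0) fs.
case: filter => [|x [|y [|z s]]] //=; rewrite /in_translate !sub0r.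
move=> /and4P[xY yY zY _] /andP[/and3P[yx zx _] /andP[/andP[zy _] _]].
by have := no_triple x y z xY yY zY; rewrite (negbTE yx) (negbTE zx) (negbTE zy).
Qed.

Lemma coset_progression_incompressible Y :
  coset_progression Y -> indiv_incompressible 2 Y.
Proof.
move=> cpY; apply: indiv_incompressible2; last first.
  by move=> x y z; exact: coset_progression_no_triple.
have [H [a [k [Hc HY]]]] := cpY.
exact/HY/in_progression_base/(proj1 Hc).
Qed.

End Incompressibility.

Theorem proposition2p11 (A : countZmodType) :
  infinite_type A -> locally_finite A ->
  exists Y : nat -> {fset A},
    (forall n, indiv_incompressible 4 (Y n)) /\
    (forall n, Y n `<=` Y n.+1) /\
    (forall n, (#|` Y n| < #|` Y n.+1| <= 2 * #|` Y n|)%N).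
Proof.
move=> Ainf _.
have step (Y : {fset A}) : exists Y', coset_progression Y ->
    [/\ coset_progression Y', Y `<=` Y' & (#|` Y| < #|` Y'| <= 2 * #|` Y|)%N].
  have [cpY | ncpY] := classic (coset_progression Y); last by exists Y => /ncpY.
  by have [Y' ? []] := coset_progression_grow Ainf cpY; exists Y'.
have [next nextP] := choice _ step.
pose Y n := iter n next [fset 0].
have cpY n : coset_progression (Y n).
  elim: n => [|n IHn]; last by have [] := nextP _ IHn.
  apply: subgroup_progression; split=> [|x y]; rewrite ?inE //.
  by move=> /eqP-> /eqP->; rewrite subr0.
exists Y; split; [|split] => n.
- exact/(indiv_incompressibleW _ (coset_progression_incompressible (cpY n))).
- by have [] := nextP _ (cpY n).
- by have [] := nextP _ (cpY n).
Qed.
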